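(* Let $\mathcal{A}$ be an $\alpha$-approximation algorithm ($\alpha\ge 1$) for the single-machine non-preemptive scheduling problem with release times and delivery times (problem $1|r_j|L_{\max}$ in the delivery-time model). Let $G$ be the dependency graph produced by the following procedure: for each semaphore $s_k$, let $\mathbf{T}_k=\{\tau_i:\sigma_i=s_k\}$; for each $\tau_i\in\mathbf{T}_k$ create a job $J_i$ with release time $r_i=C_{i,1}$, processing time $p_i=A_{i,1}$ and delivery time $q_i=C_{i,2}$; apply $\mathcal{A}$ to these jobs to obtain a non-preemptive single-machine schedule $\rho_k$; let $\pi_k$ be the order in which $\rho_k$ executes the jobs, and include the edge $(A_{i,1},A_{j,1})$ whenever $J_j$ is executed immediately after $J_i$ (not necessarily contiguously in time) in $\rho_k$; together with the edges $(C_{i,1},A_{i,1}),(A_{i,1},C_{i,2})$ for all tasks, this defines $G$. Then $len(G)\le \alpha\cdot len(G^* )$.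
   Context: Task model: a set $\mathbf{T}$ of $N$ tasks. Each task $\tau_i$ releases exactly one job at time $0$, consisting of three subjobs executed sequentially in this order: a first non-critical section of execution time $C_{i,1}\ge 0$, a critical section of execution time $A_{i,1}\ge 0$ guarded by a binary semaphore $\sigma_i\in\{s_1,\dots,s_z\}$ (each task uses exactly one semaphore), and a second non-critical section of execution time $C_{i,2}\ge 0$. Dependency graph: a dependency graph $G$ of $\mathbf{T}$ is a directed graph whose vertices are the $3N$ subjobs $C_{i,1},A_{i,1},C_{i,2}$, weighted by their execution times, containing the edges $(C_{i,1},A_{i,1})$ and $(A_{i,1},C_{i,2})$ for every $i$, and, for each semaphore $s_k$, a total order $\pi_k$ on $\mathbf{T}_k$ together with the edges $(A_{i,1},A_{j,1})$ whenever $\pi_k(\tau_i)=\pi_k(\tau_j)-1$ (no other edges). The length of a path is the sum of the weights of its vertices; $len(G)$ is the maximum length of a path in $G$. $G^*$ denotes a dependency graph minimizing $len(G)$. Delivery-time model of $1|r_j|L_{\max}$: a single machine processes jobs $J_j$ with release time $r_j\ge0$, processing time $p_j\ge 0$ and delivery time $q_j\ge 0$ non-preemptively, no job starting before its release time; if $J_j$ completes at time $c_j$, its result is delivered at $c_j+q_j$; the objective is to minimize $\max_j (c_j+q_j)$. An $\alpha$-approximation algorithm always returns a schedule whose objective is at most $\alpha$ times the optimum. *)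

From HB Require Import structures.
From mathcomp Require Import all_boot all_order all_algebra.
Set Implicit Arguments. Unset Strict Implicit. Unset Printing Implicit Defensive.
Import Order.TTheory GRing.Theory Num.Theory.
Local Open Scope ring_scope.

Record schedule (R : Type) (J : Type) := Schedule {
  sorder : seq J;
  sstart : J -> R }.

Section Sched.
Variables (R : realFieldType) (J : finType).

Definition feasible (r p : J -> R) (S : schedule R J) : Prop :=
  [/\ perm_eq (sorder S) (enum J),
      forall j, r j <= sstart S j &
      sorted (fun a b => sstart S a + p a <= sstart S b) (sorder S)].

Definition objective (p q : J -> R) (S : schedule R J) : R :=
  \big[Num.max/0]_(j : J) (sstart S j + p j + q j).
End Sched.

Definition algorithm (R : realFieldType) :=
  forall J : finType, (J -> R) -> (J -> R) -> (J -> R) -> schedule R J.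

Definition approx_alg (R : realFieldType) (alpha : R) (A : algorithm R) : Prop :=
  forall (J : finType) (r p q : J -> R),
    (forall j, [/\ 0 <= r j, 0 <= p j & 0 <= q j]) ->
    feasible r p (A J r p q) /\
    forall S : schedule R J, feasible r p S ->
      objective p q (A J r p q) <= alpha * objective p q S.

(* vertices: subjob (i, 0) = C_{i,1}, (i, 1) = A_{i,1}, (i, 2) = C_{i,2} *)
Definition vertex (N : nat) := ('I_N * 'I_3)%type.

Section DepGraph.
Variables (R : realFieldType) (N z : nat) (sigma : 'I_N -> 'I_z)
          (C1 A1 C2 : 'I_N -> R).

Definition tasks_of (k : 'I_z) : seq 'I_N := [seq i <- enum 'I_N | sigma i == k].

(* a family of orders pi_k is admissible iff each pi_k is a total order
   (a duplicate-free listing) of T_k *)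
Definition admissible (pi : 'I_z -> seq 'I_N) : Prop :=
  forall k, perm_eq (pi k) (tasks_of k).

Definition weight (v : vertex N) : R :=
  if (v.2 : nat) == 0%N then C1 v.1
  else if (v.2 : nat) == 1%N then A1 v.1 else C2 v.1.

Definition dep_edge (pi : 'I_z -> seq 'I_N) : rel (vertex N) :=
  fun u v =>
    ((u.1 == v.1) && ((((u.2 : nat) == 0%N) && ((v.2 : nat) == 1%N)) ||
                      (((u.2 : nat) == 1%N) && ((v.2 : nat) == 2%N))))
    || [&& (u.2 : nat) == 1%N, (v.2 : nat) == 1%N, sigma u.1 == sigma v.1 &
           infix [:: u.1; v.1] (pi (sigma u.1))].

Definition gpath (e : rel (vertex N)) (s : seq (vertex N)) : bool :=
  if s is x :: s' then path e x s' else true.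

Definition path_len (s : seq (vertex N)) : R := \sum_(v <- s) weight v.

(* len(G): maximum length of a (simple) path; dependency graphs are acyclic,
   so every path is simple, and a simple path is an ordering of its vertex set *)
Definition len (e : rel (vertex N)) : R :=
  \big[Num.max/0]_(X : {set vertex N})
     \big[Num.max/0]_(s <- permutations (enum X) | gpath e s) path_len s.

Definition alg_orders (A : algorithm R) (k : 'I_z) : seq 'I_N :=
  map val (sorder (A {i : 'I_N | sigma i == k}
                     (fun j => C1 (val j)) (fun j => A1 (val j))
                     (fun j => C2 (val j)))).
End DepGraph.

(* For any admissible orders, start times that respect release times and
   the order of each semaphore's critical sections bound every path: along an
   edge, the completion time of a subjob grows by at least the weight of the
   next one, so len(G) is at most the largest completion-plus-delivery time.
   The schedules rho_k give such start times for the algorithm's orders, so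
   len(G) <= max_k L_max(rho_k) <= alpha * max_k OPT_k.  Conversely, for
   arbitrary admissible orders pi, list scheduling T_k in the order pi_k
   finishes every job j (plus delivery) no later than the length of a path
   C_{i,1} -> A_{i,1} -> ... -> A_{j,1} -> C_{j,2} of G_pi, where i starts
   the idle-free stretch ending with j; hence OPT_k <= len(G_pi). *)

From HB Require Import structures.
From mathcomp Require Import all_boot all_order all_algebra.
From mathcomp Require Import lra.
Import Order.TTheory GRing.Theory Num.Theory.
Local Open Scope ring_scope.

Lemma infix_nth_succ (T : eqType) (d : T) s i : (i.+1 < size s)%N ->
  infix [:: nth d s i; nth d s i.+1] s.
Proof.
elim: s i => [|a s IH] [|i] //=.
  by case: s {IH} => [|b s] //= _; rewrite !eqxx prefix0s.
by move=> lt_is; rewrite IH ?orbT.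
Qed.

Lemma last_iota m l : last m (iota m.+1 l) = (m + l)%N.
Proof. by elim: l m => [|l IH] m /=; rewrite ?addn0 // IH addnS. Qed.

Section DependencyGraphLength.
Variables (R : realFieldType) (N z : nat) (sigma : 'I_N -> 'I_z)
          (C1 A1 C2 : 'I_N -> R).
Hypothesis times_ge0 : forall i, [/\ 0 <= C1 i, 0 <= A1 i & 0 <= C2 i].

Local Notation weight := (weight C1 A1 C2).
Local Notation path_len := (path_len C1 A1 C2).
Local Notation len := (len C1 A1 C2).

Lemma path_len_le_len e s : uniq s -> gpath e s -> path_len s <= len e.
Proof.
move=> s_uniq s_path; apply: le_trans (le_bigmax _ _ [set x in s]).
apply: le_bigmax_seq => //; rewrite mem_permutations.
by apply: uniq_perm; rewrite ?enum_uniq // => x; rewrite mem_enum inE.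
Qed.

Lemma len_ge0 e : 0 <= len e.
Proof. by have := @path_len_le_len e [::] isT isT; rewrite /path_len big_nil. Qed.

Section StartTimes.
Variables (pi : 'I_z -> seq 'I_N) (st : 'I_N -> R).
Hypothesis st_release : forall i, C1 i <= st i.
Hypothesis st_order :
  forall i j, infix [:: i; j] (pi (sigma i)) -> st i + A1 i <= st j.

Definition completion (v : vertex N) : R :=
  if (v.2 : nat) == 0%N then C1 v.1
  else if (v.2 : nat) == 1%N then st v.1 + A1 v.1
  else st v.1 + A1 v.1 + C2 v.1.

Lemma weight_le_completion v : weight v <= completion v.
Proof.
case: v => i o; have := st_release i; case: (times_ge0 i) => C1_ge0 A1_ge0 _.
by rewrite /weight /completion /=; case: ifP => _; [|case: ifP => _]; lra.
Qed.

Lemma completion_dep_edge u v :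
  dep_edge sigma pi u v -> completion u + weight v <= completion v.
Proof.
case: u => i [[|[|[|?]]] ?] //; case: v => j [[|[|[|?]]] ?] //;
  rewrite /dep_edge /completion /weight /= ?andbF ?orbF ?andbT //.
- by move=> /eqP <-; have := st_release i; lra.
- by move=> /andP[_ /st_order]; lra.
- by move=> /eqP <-.
Qed.

Lemma completion_path x s : path (dep_edge sigma pi) x s ->
  completion x + path_len s <= completion (last x s).
Proof.
elim: s x => [|y s IH] x /=; first by rewrite /path_len big_nil addr0.
case/andP => /completion_dep_edge xy /IH ys.
by rewrite /path_len big_cons addrA; apply: le_trans _ ys; rewrite lerD2r.
Qed.

Lemma len_le_completion B : 0 <= B ->
  (forall i, st i + A1 i + C2 i <= B) -> len (dep_edge sigma pi) <= B.
Proof.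
move=> B_ge0 st_B; apply: bigmax_le => // X _; apply: bigmax_le => // -[|x s] //=.
  by rewrite /path_len big_nil.
move=> /completion_path xs; rewrite /path_len big_cons.
apply: le_trans (le_trans _ xs) _; first by rewrite lerD2r weight_le_completion.
case: (last x s) => i o; have := st_B i.
have := st_release i; case: (times_ge0 i) => C1_ge0 A1_ge0 C2_ge0.
by rewrite /completion /=; case: ifP => _; [|case: ifP => _]; lra.
Qed.
End StartTimes.

Local Notation task_set k := {i : 'I_N | sigma i == k}.

Section AlgorithmOrders.
Variable A : algorithm R.
Hypothesis A_feasible : forall (J : finType) (r p q : J -> R),
  (forall j, [/\ 0 <= r j, 0 <= p j & 0 <= q j]) -> feasible r p (A J r p q).

Definition sem_schedule k : schedule R (task_set k) :=
  A (task_set k) (fun j => C1 (val j)) (fun j => A1 (val j)) (fun j => C2 (val j)).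

Definition sem_objective k : R :=
  objective (fun j : task_set k => A1 (val j)) (fun j => C2 (val j)) (sem_schedule k).

Definition alg_start (i : 'I_N) : R :=
  sstart (sem_schedule (sigma i)) (Sub i (eqxx (sigma i))).

Lemma alg_startE k (j : task_set k) : alg_start (val j) = sstart (sem_schedule k) j.
Proof.
case: j => i /= sigma_i; have def_k := eqP sigma_i; subst k.
by rewrite /alg_start; congr (sstart _ _); apply: val_inj.
Qed.

Lemma sem_schedule_feasible k :
  feasible (fun j : task_set k => C1 (val j)) (fun j => A1 (val j)) (sem_schedule k).
Proof. by apply: A_feasible => j; apply: times_ge0. Qed.

Lemma alg_start_release i : C1 i <= alg_start i.
Proof. by case: (sem_schedule_feasible (sigma i)) => _ /(_ (Sub i (eqxx (sigma i)))). Qed.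

Lemma alg_start_order i j : infix [:: i; j] (alg_orders sigma C1 A1 C2 A (sigma i)) ->
  alg_start i + A1 i <= alg_start j.
Proof.
case: (sem_schedule_feasible (sigma i)) => _ _ sorted_sched ij.
have : sorted (fun a b => alg_start a + A1 a <= alg_start b)
              (alg_orders sigma C1 A1 C2 A (sigma i)).
  rewrite sorted_map; apply: sub_sorted sorted_sched => a b /=.
  by rewrite !alg_startE.
by move/(infix_sorted ij) => /= /andP[].
Qed.

Lemma alg_completion_le i : alg_start i + A1 i + C2 i <= sem_objective (sigma i).
Proof. exact: (le_bigmax _ _ (Sub i (eqxx (sigma i)) : task_set (sigma i))). Qed.

Lemma len_alg_orders_le B : 0 <= B -> (forall k, sem_objective k <= B) ->
  len (dep_edge sigma (alg_orders sigma C1 A1 C2 A)) <= B.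
Proof.
move=> B_ge0 obj_B; apply: len_le_completion B_ge0 _ => [||i].
- exact: alg_start_release.
- exact: alg_start_order.
- exact: le_trans (alg_completion_le i) (obj_B _).
Qed.
End AlgorithmOrders.

Section ListSchedule.
Variables (pi : 'I_z -> seq 'I_N) (k : 'I_z) (d : 'I_N).
Hypothesis pi_admissible : admissible sigma pi.

Local Notation o := (pi k).
Local Notation e := (dep_edge sigma pi).
Local Notation task t := (nth d o t).

Lemma order_uniq : uniq o.
Proof. by rewrite (perm_uniq (pi_admissible k)) filter_uniq // enum_uniq. Qed.

Lemma mem_order x : (x \in o) = (sigma x == k).
Proof. by rewrite (perm_mem (pi_admissible k)) mem_filter mem_enum andbT. Qed.

Definition vC1 i : vertex N := (i, @Ordinal 3 0 isT).
Definition vA1 i : vertex N := (i, @Ordinal 3 1 isT).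
Definition vC2 i : vertex N := (i, @Ordinal 3 2 isT).

Lemma critical_chain_path m l : (m + l < size o)%N ->
  path e (vA1 (task m)) [seq vA1 (task t) | t <- iota m.+1 l].
Proof.
elim: l m => [|l IH] m //= lt_ml.
have lt_m1 : (m.+1 < size o)%N.
  by apply: leq_ltn_trans lt_ml; rewrite addnS ltnS leq_addr.
have sigma_o t : (t < size o)%N -> sigma (task t) = k.
  by move=> lt_t; apply/eqP; rewrite -mem_order mem_nth.
rewrite IH ?addSnnS // andbT /dep_edge /= sigma_o ?sigma_o ?eqxx //=; last exact: ltnW.
by rewrite infix_nth_succ ?orbT.
Qed.

Definition critical_path m l : seq (vertex N) :=
  vC1 (task m) :: rcons [seq vA1 (task t) | t <- iota m l.+1] (vC2 (task (m + l))).

Lemma critical_path_uniq m l : (m + l < size o)%N -> uniq (critical_path m l).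
Proof.
move=> lt_ml; rewrite /critical_path cons_uniq rcons_uniq mem_rcons inE negb_or.
have vC_notin : forall i, vC1 i \notin [seq vA1 (task t) | t <- iota m l.+1] /\
                          vC2 i \notin [seq vA1 (task t) | t <- iota m l.+1].
  by move=> i; split; apply/mapP => -[].
have [vC1_notin _] := vC_notin (task m); have [_ vC2_notin] := vC_notin (task (m + l)).
have vC1_vC2 : vC1 (task m) != vC2 (task (m + l)) by rewrite xpair_eqE andbF.
rewrite vC1_notin vC2_notin vC1_vC2 !andTb.
have lt_t t : t \in iota m l.+1 -> (t < size o)%N.
  by rewrite mem_iota addnS ltnS => /andP[_ /leq_ltn_trans]; apply.
rewrite map_inj_in_uniq ?iota_uniq // => t t' /lt_t lt_t' /lt_t lt_t'' [].
by move/eqP; rewrite nth_uniq ?order_uniq // => /eqP.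
Qed.

Lemma critical_path_gpath m l : (m + l < size o)%N -> gpath e (critical_path m l).
Proof.
move=> lt_ml; rewrite /= rcons_path; apply/and3P; split.
- by rewrite /dep_edge /= eqxx.
- exact: critical_chain_path.
- by rewrite (last_map (fun t => vA1 (task t))) last_iota /dep_edge /= eqxx.
Qed.

Lemma path_len_critical_path m l : path_len (critical_path m l) =
  C1 (task m) + \sum_(m <= t < (m + l).+1) A1 (task t) + C2 (task (m + l)).
Proof.
rewrite /path_len big_cons big_rcons big_map /index_iota subSn ?leq_addr // addKn.
by rewrite !addrA.
Qed.

Lemma critical_path_le_len m n : (m <= n < size o)%N ->
  C1 (task m) + \sum_(m <= t < n.+1) A1 (task t) + C2 (task n) <= len e.
Proof.
case/andP=> le_mn lt_n; have lt_ml : (m + (n - m) < size o)%N by rewrite subnKC.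
have := path_len_le_len _ _ (critical_path_uniq _ _ lt_ml) (critical_path_gpath _ _ lt_ml).
by rewrite path_len_critical_path subnKC.
Qed.

(* Earliest start of the [n]-th job of [pi k] under list scheduling in that
   order: the idle-free stretch ending with it begins with some job [m <= n]
   at its release time. *)
Definition list_start n : R :=
  \big[Num.max/0]_(m < n.+1) (C1 (task m) + \sum_(m <= t < n) A1 (task t)).

Lemma list_start_ge m n : (m <= n)%N ->
  C1 (task m) + \sum_(m <= t < n) A1 (task t) <= list_start n.
Proof. by move=> le_mn; apply: (le_bigmax _ _ (@Ordinal n.+1 m le_mn)). Qed.

Lemma list_start_release n : C1 (task n) <= list_start n.
Proof. by have := list_start_ge _ _ (leqnn n); rewrite big_geq // addr0. Qed.

Lemma list_start_succ n : list_start n + A1 (task n) <= list_start n.+1.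
Proof.
rewrite -lerBrDr; apply: bigmax_le => [|m _].
  have := list_start_ge _ _ (leqnSn n); rewrite big_nat1.
  by case: (times_ge0 (task n)) => C1_ge0 _ _; lra.
rewrite lerBrDr -addrA -big_nat_recr /=; last exact: ltnSE (ltn_ord m).
exact: list_start_ge _ _ (ltnW (ltn_ord m)).
Qed.

Lemma list_start_completion n : (n < size o)%N ->
  list_start n + A1 (task n) + C2 (task n) <= len e.
Proof.
move=> lt_n; rewrite -addrA -lerBrDr; apply: bigmax_le => [|m _].
  have := @critical_path_le_len n n; rewrite leqnn lt_n big_nat1 => /(_ isT).
  by case: (times_ge0 (task n)) => C1_ge0 _ _; lra.
have := @critical_path_le_len m n; rewrite -ltnS ltn_ord lt_n big_nat_recr //=.
  by move=> /(_ isT); lra.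
by rewrite -ltnS.
Qed.

Lemma list_schedule_le_len : exists S : schedule R (task_set k),
  feasible (fun j => C1 (val j)) (fun j => A1 (val j)) S /\
  objective (fun j => A1 (val j)) (fun j => C2 (val j)) S <= len e.
Proof.
pose s : seq (task_set k) := pmap insub o.
have map_val_s : map val s = o.
  rewrite pmap_filter; last exact: insubK.
  by apply/all_filterP/allP => x x_o /=; rewrite isSome_insub -mem_order.
have val_o (j : task_set k) : val j \in o by rewrite mem_order (valP j).
exists (Schedule s (fun j => list_start (index (val j) o))); split; [split|] => /=.
- apply: uniq_perm; [exact: pmap_sub_uniq order_uniq | exact: enum_uniq |].
  by move=> j; rewrite mem_pmap_sub mem_enum val_o.
- by move=> j; rewrite -{1}(nth_index d (val_o j)); apply: list_start_release.
- have : sorted (fun x y => list_start (index x o) + A1 x <= list_start (index y o)) o.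
    apply/(sortedP d) => i lt_i; rewrite !index_uniq ?order_uniq ?(ltnW lt_i) //.
    exact: list_start_succ.
  by rewrite -map_val_s sorted_map.
- apply: bigmax_le => [|j _ /=]; first exact: len_ge0.
  have := list_start_completion (index (val j) o).
  by rewrite index_mem val_o (nth_index d (val_o j)); apply.
Qed.
End ListSchedule.

Lemma sem_objective_le_approx (alpha : R) (A : algorithm R) pi k :
  0 <= alpha -> approx_alg alpha A -> admissible sigma pi ->
  sem_objective A k <= alpha * len (dep_edge sigma pi).
Proof.
move=> alpha_ge0 A_approx pi_admissible.
apply: bigmax_le => [|j _]; first exact: mulr_ge0 alpha_ge0 (len_ge0 _).
have [S [S_feasible S_len]] := list_schedule_le_len pi k (val j) pi_admissible.
have [_ /(_ S S_feasible) A_opt] := A_approx (task_set k) (fun j => C1 (val j))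
  (fun j => A1 (val j)) (fun j => C2 (val j)) (fun j => times_ge0 (val j)).
exact: le_trans (le_trans (le_bigmax _ _ j) A_opt) (ler_wpM2l alpha_ge0 S_len).
Qed.

End DependencyGraphLength.

Theorem mainTheorem7 (R : realFieldType) (alpha : R) (A : algorithm R)
  (N z : nat) (sigma : 'I_N -> 'I_z) (C1 A1 C2 : 'I_N -> R) :
  1 <= alpha ->
  approx_alg alpha A ->
  (forall i, [/\ 0 <= C1 i, 0 <= A1 i & 0 <= C2 i]) ->
  forall pi : 'I_z -> seq 'I_N, admissible sigma pi ->
    len C1 A1 C2 (dep_edge sigma (alg_orders sigma C1 A1 C2 A))
    <= alpha * len C1 A1 C2 (dep_edge sigma pi).
Proof.
move=> alpha_ge1 A_approx times_ge0 pi pi_admissible.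
have alpha_ge0 : 0 <= alpha := le_trans ler01 alpha_ge1.
apply: len_alg_orders_le => // [J r p q rpq_ge0||k].
- exact: (A_approx J r p q rpq_ge0).1.
- by rewrite mulr_ge0 ?len_ge0.
- exact: sem_objective_le_approx.
Qed.
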